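(* Let $M=p_1^{n_1}\cdots p_K^{n_K}$ with distinct primes and $n_\nu\in\mathbb{N}$, and let $A\oplus B=\mathbb{Z}_M$. Fix distinct $i,j\in\{1,\dots,K\}$, let $z\in\mathbb{Z}_M$, and let $\Lambda=\Lambda(z,M/(p_ip_j))$. Let $a\in A$, $b\in B$ satisfy $a+b=z$. Then there exists $\nu\in\{i,j\}$ such that $\Sigma_A(\Lambda)\subset A\cap\Pi(a,p_\nu^{n_\nu-1})$ and $\Sigma_B(\Lambda)\subset B\cap\Pi(b,p_\nu^{n_\nu-1})$.
   Context: $A\oplus B=\mathbb{Z}_M$ means every element of $\mathbb{Z}_M$ is uniquely $a+b$ with $a\in A$, $b\in B$. For $d\mid M$, $\Lambda(x,d)=\{x'\in\mathbb{Z}_M: d\mid x-x'\}$, and $\Pi(x,p^\alpha)=\Lambda(x,p^\alpha)$. For $Z\subset\mathbb{Z}_M$, $\Sigma_A(Z)=\{a\in A:a+b\in Z\text{ for some }b\in B\}$, $\Sigma_B(Z)=\{b\in B:a+b\in Z\text{ for some }a\in A\}$. *)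

(* Z_M is modelled by 'Z_M (the statement forces M >= 2). *)
From mathcomp Require Import all_boot all_order all_algebra.
Set Implicit Arguments. Unset Strict Implicit. Unset Printing Implicit Defensive.
Import GRing.Theory.
Local Open Scope ring_scope.

Definition tiling (M : nat) (A B : {set 'Z_M}) : Prop :=
  forall x : 'Z_M, exists! ab : 'Z_M * 'Z_M,
    [/\ ab.1 \in A, ab.2 \in B & ab.1 + ab.2 = x].

(* Lambda(x,d) = { x' in Z_M : d | x - x' }  (difference taken in Z_M,
   represented by its residue in [0, M)). *)
Definition Lam (M d : nat) (x : 'Z_M) : {set 'Z_M} :=
  [set x' : 'Z_M | (d %| nat_of_ord (x - x')%R)%N].

Definition Pi (M q : nat) (x : 'Z_M) : {set 'Z_M} := @Lam M q x.

Definition SigmaA (M : nat) (A B Z : {set 'Z_M}) : {set 'Z_M} :=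
  [set a in A | [exists b in B, a + b \in Z]].

Definition SigmaB (M : nat) (A B Z : {set 'Z_M}) : {set 'Z_M} :=
  [set b in B | [exists a in A, a + b \in Z]].
Arguments Lam M d x : clear implicits.
Arguments Pi M q x : clear implicits.

From mathcomp Require Import all_boot all_order all_algebra all_fingroup all_solvable.
From mathcomp Require Import ring zify.
Set Implicit Arguments. Unset Strict Implicit. Unset Printing Implicit Defensive.
Import GRing.Theory.

(* Tijdeman: if A (+) B = Z_M and u is coprime to M, then uA (+) B = Z_M. For a prime
   u = p, counting the p-tuples of A whose sum lies in x - B modulo the cyclic shift
   (whose fixed points are the constant tuples) shows that the number of
   representations x = p a + b is congruent to |A|^(p-1), hence nonzero, modulo p;
   as these numbers add up to |A||B| = M, each is 1. Thus (a1 - a2) u = b2 - b1 with u a unit forces a1 = a2.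

   Write M = p_i^n_i p_j^n_j R. If a1 + b1 and a2 + b2 lie in Lambda while neither
   p_i^(n_i-1) nor p_j^(n_j-1) divides a1 - a2, then gcd((a1 - a2) p_i p_j R, M)
   divides M/(p_i p_j), which divides (b2 - b1) - (a1 - a2); this gives a unit
   u = 1 + p_i p_j R k with (a1 - a2) u = b2 - b1, a contradiction. So any two
   elements of Sigma_A(Lambda) are congruent modulo p_i^(n_i-1) or modulo
   p_j^(n_j-1); for two equivalence relations this confines Sigma_A(Lambda) to one
   class of one of them, and the congruence passes to Sigma_B(Lambda) because
   M/(p_i p_j) divides (a + b) - (a' + b'). *)

Lemma coprime_prime_gt0 (R p : nat) : prime p -> coprime R p -> 0 < R.
Proof.
move=> p_prime; rewrite lt0n; apply: contraTneq => ->.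
by rewrite /coprime gcd0n neq_ltn prime_gt1 ?orbT.
Qed.

Lemma coprime_prod_pfactor (I : finType) (P : pred I) (p n : I -> nat) (l : I) :
  (forall k, prime (p k)) -> injective p -> ~~ P l ->
  coprime (\prod_(k | P k) p k ^ n k) (p l).
Proof.
move=> p_prime p_inj Pl; apply: (big_ind (fun m => coprime m (p l))) => [|m1 m2|k Pk].
- exact: coprime1n.
- by rewrite coprimeMl => -> ->.
apply: coprimeXl; rewrite prime_coprime // dvdn_prime2 //.
by apply: contraNneq Pl => /p_inj <-.
Qed.

Lemma coprime_1addM (M L k : nat) :
  (forall p, prime p -> p %| M -> p %| L) -> coprime (1 + L * k) M.
Proof.
move=> rad_L; set g := gcdn (1 + L * k) M; have [g_le1 | g_gt1] := leqP g 1.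
  by apply/eqP/anti_leq; rewrite g_le1 gcdn_gt0.
have p_prime := pdiv_prime g_gt1; have p_g := pdiv_dvd g.
have p_L := rad_L _ p_prime (dvdn_trans p_g (dvdn_gcdr _ _)).
have := dvdn_trans p_g (dvdn_gcdl _ M).
by rewrite dvdn_addl ?dvdn_mulr // Euclid_dvd1.
Qed.

Lemma coprime_mul_shift (M L x d : nat) : 0 < M ->
    (forall p, prime p -> p %| M -> p %| L) -> gcdn (x * L) M %| d ->
  exists2 u, coprime u M & x * u = x + d %[mod M].
Proof.
move=> M_gt0 rad_L /dvdnP[e ->]; have [xL0 | xL_gt0] := posnP (x * L).
  by exists 1; rewrite ?coprime1n // xL0 gcd0n muln1 addnC modnMDl.
have [km kn def_g _] := egcdnP M xL_gt0.
exists (1 + L * (km * e)); first exact: coprime_1addM.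
have -> : x * (1 + L * (km * e)) = e * kn * M + (x + e * gcdn (x * L) M).
  by rewrite -addnCA -mulnA -mulnDr addnC -def_g; ring.
by rewrite modnMDl.
Qed.

Lemma dvdn_logn (m n : nat) : 0 < m -> 0 < n ->
  (forall p, prime p -> logn p m <= logn p n) -> m %| n.
Proof.
move=> m_gt0 n_gt0 le_log; apply/dvdn_partP => // p.
by rewrite mem_primes p_part => /andP[p_prime _]; rewrite pfactor_dvdn ?le_log.
Qed.

Lemma gcdn_mul_rad_dvd (p1 p2 k1 k2 R x : nat) :
    prime p1 -> prime p2 -> p1 != p2 -> coprime R p1 -> coprime R p2 ->
    ~~ (p1 ^ k1 %| x) -> ~~ (p2 ^ k2 %| x) ->
  gcdn (x * (p1 * p2 * R)) (p1 ^ k1.+1 * p2 ^ k2.+1 * R) %| p1 ^ k1 * p2 ^ k2 * R.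
Proof.
move=> p1_prime p2_prime p1_neq_p2 R_p1 R_p2 x_p1 x_p2.
have x_gt0 : 0 < x by rewrite lt0n; apply: contraNneq x_p1 => ->.
have R_gt0 := coprime_prime_gt0 p1_prime R_p1.
have p1_gt0 := prime_gt0 p1_prime; have p2_gt0 := prime_gt0 p2_prime.
have gt0E := (gcdn_gt0, muln_gt0, expn_gt0, x_gt0, R_gt0, p1_gt0, p2_gt0).
rewrite pfactor_dvdn // -ltnNge in x_p1; rewrite pfactor_dvdn // -ltnNge in x_p2.
apply: dvdn_logn => [||p p_prime]; rewrite ?gt0E //.
rewrite logn_gcd ?gt0E // !lognM ?gt0E // !lognX.
rewrite (logn_prime p p1_prime) (logn_prime p p2_prime).
have [-> | _] := eqVneq p p1.
  rewrite (negbTE p1_neq_p2) [logn p1 R]logn_coprime 1?coprime_sym //=; lia.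
have [-> | _] := eqVneq p p2; last by lia.
rewrite [logn p2 R]logn_coprime 1?coprime_sym //=; lia.
Qed.

Local Open Scope ring_scope.

Section ZpDivisibility.

Variables (M d : nat).
Hypotheses (M_gt1 : (1 < M)%N) (d_dvd_M : (d %| M)%N).

Lemma dvdn_valD (x y : 'Z_M) : (d %| x)%N -> (d %| (x + y)%R)%N = (d %| y)%N.
Proof.
move=> d_x; have -> : x + y = (x + y)%N%:R by rewrite natrD !natr_Zp.
by rewrite val_Zp_nat // /dvdn modn_dvdm // -/(dvdn _ _) dvdn_addr.
Qed.

Lemma dvdn_valN (x : 'Z_M) : (d %| (- x)%R)%N = (d %| x)%N.
Proof.
have dvdN (y : 'Z_M) : (d %| y)%N -> (d %| (- y)%R)%N.
  by move=> d_y; rewrite -(dvdn_valD _ d_y) subrr dvdn0.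
by apply/idP/idP => /dvdN //; rewrite opprK.
Qed.

Lemma dvdn_valB (x y : 'Z_M) : (d %| x)%N -> (d %| y)%N -> (d %| (x - y)%R)%N.
Proof. by move=> d_x d_y; rewrite dvdn_valD // dvdn_valN. Qed.

Lemma Lam_equiv : equivalence_rel (fun x y => y \in Lam M d x).
Proof.
move=> x y z; rewrite !inE subrr dvdn0; split=> // d_xy.
have -> : x - z = (x - y) + (y - z) by rewrite addrA subrK.
by rewrite (dvdn_valD _ d_xy).
Qed.

End ZpDivisibility.

Definition rot1 (p : nat) (T : Type) (f : {ffun 'Z_p -> T}) := [ffun i => f (i + 1)].

Lemma sum_rot1 (p : nat) (V : zmodType) (f : {ffun 'Z_p -> V}) :
  \sum_i rot1 f i = \sum_i f i.
Proof. by rewrite [RHS](reindex_inj (addIr 1)); apply: eq_bigr => i _; rewrite ffunE. Qed.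

Section CyclicShift.

Variables (p : nat) (T : finType).

Lemma rot1_inj : injective (@rot1 p T).
Proof.
move=> f g /ffunP eq_fg; apply/ffunP => i.
by have := eq_fg (i - 1); rewrite !ffunE subrK.
Qed.

Definition rot1_perm := perm rot1_inj.

Lemma rot1_pgroup : prime p -> (p.-group <[rot1_perm]>)%g.
Proof.
move=> p_prime; apply: pnat_dvd (pnat_id p_prime); rewrite order_dvdn.
have rotX k f : (rot1_perm ^+ k)%g f = [ffun i => f (i + k%:R)].
  elim: k f => [|k IHk] f; apply/ffunP => i.
    by rewrite expg0 perm1 ffunE addr0.
  by rewrite expgSr permM IHk permE !ffunE mulrS addrA.
apply/eqP/permP => f; rewrite rotX perm1; apply/ffunP => i.
by rewrite ffunE pchar_Zp ?prime_gt1 // addr0.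
Qed.

Lemma rot1_fixed (f : {ffun 'Z_p -> T}) : rot1 f = f -> f = [ffun=> f 0].
Proof.
move=> fixf; have fk k : f k%:R = f 0.
  by elim: k => [|k IHk] //; rewrite -IHk -{2}fixf ffunE -mulrSr.
by apply/ffunP => i; rewrite ffunE -(natr_Zp i) fk.
Qed.

End CyclicShift.

Section TilingCounts.

Variables (M : nat) (A B : {set 'Z_M}).
Hypothesis tAB : tiling A B.

Lemma tiling_inj (a1 a2 b1 b2 : 'Z_M) : a1 \in A -> a2 \in A -> b1 \in B -> b2 \in B ->
  a1 + b1 = a2 + b2 -> (a1, b1) = (a2, b2).
Proof.
move=> a1A a2A b1B b2B eq_sum; have [ab [_ uniq_rep]] := tAB (a2 + b2).
by rewrite -(uniq_rep (a1, b1)) ?(uniq_rep (a2, b2)); split.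
Qed.

Lemma tiling_card : (1 < M)%N -> (#|A| * #|B|)%N = M.
Proof.
move=> M_gt1; rewrite -cardsX; transitivity #|[set: 'Z_M]|; last first.
  by rewrite cardsT card_ord Zp_cast.
have -> : [set: 'Z_M] = [set ab.1 + ab.2 | ab in setX A B].
  apply/esym/eqP; rewrite eqEsubset subsetT; apply/subsetP => x _.
  by have [ab [[aA bB <-] _]] := tAB x; apply: imset_f; rewrite inE aA bB.
apply/esym/card_in_imset => -[a1 b1] [a2 b2] /setXP[a1A b1B] /setXP[a2A b2B].
exact: tiling_inj.
Qed.

Definition sum_reps (I : finType) (x : 'Z_M) :=
  [set f : {ffun I -> 'Z_M} | [forall i, f i \in A] && (x - \sum_i f i \in B)].

Lemma card_sum_reps (I : finType) (i0 : I) (x : 'Z_M) :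
  #|sum_reps I x| = (#|A| ^ #|I|.-1)%N.
Proof.
pose drop0 (f : {ffun I -> 'Z_M}) : {ffun I -> 'Z_M} :=
  [ffun i => if i == i0 then 0 else f i].
pose F i : pred 'Z_M := if i == i0 then pred1 0 else mem A.
have sum_drop0 f : \sum_(i | i != i0) drop0 f i = \sum_(i | i != i0) f i.
  by apply: eq_bigr => i /negbTE i_neq0; rewrite ffunE i_neq0.
have drop0_inj : {in sum_reps I x &, injective drop0}.
  move=> f g; rewrite !inE => /andP[/forallP fA fB] /andP[/forallP gA gB] eq_fg.
  have eq_off i : i != i0 -> f i = g i.
    by move=> /negbTE i_neq0; move/ffunP/(_ i): eq_fg; rewrite !ffunE i_neq0.
  have eq_rest : \sum_(i | i != i0) f i = \sum_(i | i != i0) g i.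
    by rewrite -sum_drop0 eq_fg sum_drop0.
  have eq0 : f i0 = g i0.
    move: fB gB; rewrite [\sum_i f i](bigD1 i0) // [\sum_i g i](bigD1 i0) //= -eq_rest.
    move=> fB gB; have := tiling_inj (fA i0) (gA i0) fB gB.
    by rewrite !(addrCA _ x) !opprD !addNKr => /(_ erefl) [].
  by apply/ffunP => i; case: (eqVneq i i0) => [->|/eq_off].
have drop0_im : drop0 @: sum_reps I x = [set g | g \in family F].
  apply/eqP; rewrite eqEsubset; apply/andP; split; apply/subsetP => g.
    case/imsetP => f; rewrite !inE => /andP[/forallP fA _] ->.
    by apply/familyP => i; rewrite /F ffunE; case: eqP.
  rewrite inE => /familyP gF.
  have g0 : g i0 = 0 by have := gF i0; rewrite /F eqxx => /eqP.
  have [[a b] [[/= aA bB ab_eq] _]] := tAB (x - \sum_(i | i != i0) g i).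
  pose f := [ffun i => if i == i0 then a else g i].
  have sum_f : \sum_(i | i != i0) f i = \sum_(i | i != i0) g i.
    by apply: eq_bigr => i /negbTE i_neq0; rewrite ffunE i_neq0.
  apply/imsetP; exists f.
    rewrite inE (bigD1 i0) //= sum_f ffunE eqxx; apply/andP; split.
      apply/forallP => i; rewrite ffunE; case: eqP => [// | /eqP i_neq0].
      by have := gF i; rewrite /F (negbTE i_neq0).
    by rewrite opprD addrCA -ab_eq addKr.
  by apply/ffunP => i; rewrite !ffunE; case: eqP => [->|].
rewrite -(card_in_imset drop0_inj) drop0_im cardsE card_family foldrE big_image /=.
rewrite (bigD1 i0) //= /F eqxx card1 mul1n (eq_bigr (fun _ => #|A|)).
  by rewrite prod_nat_const cardC1.
by move=> i /negbTE ->.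
Qed.

Lemma card_sum_reps_mod (p : nat) (x : 'Z_M) : prime p ->
  #|sum_reps 'Z_p x| = #|[set a in A | x - a *+ p \in B]| %[mod p].
Proof.
move=> p_prime; set S := sum_reps 'Z_p x; set s := rot1_perm p 'Z_M.
have sum_const (a : 'Z_M) : \sum_(i : 'Z_p) [ffun=> a] i = a *+ p.
  by under eq_bigr do rewrite ffunE; rewrite sumr_const card_ord Zp_cast ?prime_gt1.
have rotS f : (rot1 f \in S) = (f \in S).
  rewrite !inE sum_rot1; congr (_ && _); apply/forallP/forallP => fA i.
    by have := fA (i - 1); rewrite ffunE subrK.
  by rewrite ffunE.
have actsS : [acts <[s]>%g, on S | 'P].
  by rewrite cycle_subG; apply/astabsP => f; rewrite /= /aperm permE rotS.
rewrite (pgroup_fix_mod (rot1_pgroup _ p_prime) actsS) afix_cycle.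
have -> : (S :&: 'Fix_'P[s])%g = [set [ffun=> a] | a in [set a in A | x - a *+ p \in B]].
  apply/eqP; rewrite eqEsubset; apply/andP; split; apply/subsetP => f.
    rewrite inE => /andP[fS /afix1P]; rewrite /= /aperm permE => /rot1_fixed f_const.
    move: fS; rewrite f_const !inE sum_const => /andP[/forallP/(_ 0)].
    by rewrite ffunE => f0A f0B; apply: imset_f; rewrite inE f0A.
  case/imsetP => a; rewrite inE => /andP[aA aB] ->; rewrite inE; apply/andP; split.
    by rewrite !inE sum_const aB andbT; apply/forallP => i; rewrite ffunE.
  by apply/afix1P; rewrite /= /aperm permE; apply/ffunP => i; rewrite !ffunE.
by rewrite card_imset // => a1 a2 /ffunP/(_ 0); rewrite !ffunE.
Qed.

End TilingCounts.

Lemma tiling_mulrn_prime (M p : nat) (A B : {set 'Z_M}) : (1 < M)%N -> prime p ->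
  coprime p M -> tiling A B -> tiling [set a *+ p | a in A] B.
Proof.
move=> M_gt1 p_prime p_coprime tAB.
pose reps x := [set a in A | x - a *+ p \in B].
have reps_gt0 x : (0 < #|reps x|)%N.
  have := card_sum_reps_mod A B x p_prime.
  rewrite (card_sum_reps tAB 0) -/(reps x).
  move=> eq_mod; rewrite lt0n; apply/negP => /eqP reps0; move/eqP: eq_mod.
  rewrite reps0 mod0n -/(dvdn p _) Euclid_dvdX // => /andP[p_dvd_A _].
  by move: p_coprime; rewrite prime_coprime // -(tiling_card tAB M_gt1) dvdn_mulr.
have sum_card_reps : (\sum_x #|reps x|)%N = M.
  rewrite -[RHS](tiling_card tAB M_gt1) -sum_nat_const.
  have card_reps x : #|reps x| = (\sum_(a in A) ((x - a *+ p)%R \in B))%N.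
    rewrite -sum1_card big_mkcond [RHS]big_mkcond /=; apply: eq_bigr => a _.
    by rewrite inE; case: (a \in A); case: (_ \in B).
  under eq_bigr do rewrite card_reps.
  rewrite exchange_big /=; apply: eq_bigr => a _.
  rewrite (reindex_inj (addIr (a *+ p))) /= -sum1_card [RHS]big_mkcond /=.
  by apply: eq_bigr => x _; rewrite addrK; case: (x \in B).
have reps1 x : #|reps x| = 1%N.
  have : (\sum_x (#|reps x| - 1))%N = 0%N.
    by rewrite sumnB => [|y _]; rewrite ?sum_card_reps ?sum1_card ?card_ord ?Zp_cast ?subnn.
  move/eqP; rewrite sum_nat_eq0 => /forallP/(_ x); rewrite subn_eq0.
  by move=> /= reps_le1; apply/eqP; rewrite eqn_leq reps_le1 reps_gt0.
move=> x; have /cards1P[a reps_x] : #|reps x| == 1%N by rewrite reps1.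
have : a \in reps x by rewrite reps_x set11.
rewrite inE => /andP[aA aB]; exists (a *+ p, x - a *+ p); split.
  by split=> //=; [exact: imset_f | rewrite addrC subrK].
move=> [_ b] [/= /imsetP[a' a'A ->] bB x_eq].
have : a' \in reps x by rewrite inE a'A -x_eq [a' *+ p + b]addrC addrK.
by rewrite reps_x inE => /eqP a'_eq; rewrite -x_eq a'_eq [a *+ p + b]addrC addrK.
Qed.

Theorem tiling_mulrn (M u : nat) (A B : {set 'Z_M}) : (1 < M)%N -> coprime u M ->
  tiling A B -> tiling [set a *+ u | a in A] B.
Proof.
move=> M_gt1; elim/ltn_ind: u A => u IHu A u_coprime tAB.
have [u_le1 | u_gt1] := leqP u 1.
  case: u u_le1 u_coprime {IHu} => [_ | [_ _ | //]].
    by rewrite /coprime gcd0n => /eqP M1; rewrite M1 in M_gt1.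
  by rewrite (eq_imset _ (@mulr1n _)) imset_id.
set p := pdiv u; have p_prime : prime p := pdiv_prime u_gt1.
have u_eq : u = (u %/ p * p)%N by rewrite divnK ?pdiv_dvd.
have coprime_dvd d : (d %| u)%N -> coprime d M by move/coprime_dvdl; apply.
have tA' : tiling [set a *+ (u %/ p) | a in A] B.
  apply: IHu => //; first by rewrite ltn_Pdiv ?prime_gt1 // ltnW.
  by apply: coprime_dvd; rewrite dvdn_div ?pdiv_dvd.
have := tiling_mulrn_prime M_gt1 p_prime (coprime_dvd _ (pdiv_dvd u)) tA'.
by rewrite -imset_comp {2}u_eq; under eq_imset do rewrite /= -mulrnA.
Qed.

Lemma tiling_diff_unit (M u : nat) (A B : {set 'Z_M}) (a1 a2 b1 b2 : 'Z_M) :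
  (1 < M)%N -> coprime u M -> tiling A B -> a1 \in A -> a2 \in A -> b1 \in B -> b2 \in B ->
  (a1 - a2) *+ u = b2 - b1 -> a1 = a2.
Proof.
move=> M_gt1 u_coprime tAB a1A a2A b1B b2B diff_eq.
have u_unit : (u%:R : 'Z_M) \is a GRing.unit by rewrite unitZpE // coprime_sym.
apply: (mulIr u_unit); rewrite !mulr_natr.
suff [] : (a1 *+ u, b1) = (a2 *+ u, b2) by [].
apply: (tiling_inj (tiling_mulrn M_gt1 u_coprime tAB)) => //; try exact: imset_f.
by rewrite -[a1 *+ u](subrK (a2 *+ u)) -mulrnBl diff_eq addrAC subrK addrC.
Qed.

Lemma tiling_eq_of_gcdn_dvd (M L : nat) (A B : {set 'Z_M}) (a1 a2 b1 b2 : 'Z_M) :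
    (1 < M)%N -> tiling A B -> a1 \in A -> a2 \in A -> b1 \in B -> b2 \in B ->
    (forall p, prime p -> p %| M -> p %| L)%N ->
    (gcdn ((a1 - a2)%R * L) M %| ((a2 + b2) - (a1 + b1))%R)%N ->
  a1 = a2.
Proof.
move=> M_gt1 tAB a1A a2A b1B b2B rad_L gcd_dvd.
have [u u_coprime u_eq] := coprime_mul_shift (ltnW M_gt1) rad_L gcd_dvd.
apply: (tiling_diff_unit M_gt1 u_coprime tAB a1A a2A b1B b2B).
rewrite -[a1 - a2]natr_Zp -mulrnA -Zp_nat_mod // u_eq Zp_nat_mod //.
by rewrite natrD !natr_Zp; ring.
Qed.

Lemma equiv_cover_class (T : finType) (e1 e2 : rel T) (S : {pred T}) (a : T) :
    equivalence_rel e1 -> equivalence_rel e2 -> a \in S ->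
    {in S &, forall x y, e1 x y || e2 x y} ->
  {in S, forall x, e1 a x} \/ {in S, forall x, e2 a x}.
Proof.
move=> /equivalence_relP[e1_refl e1_trans] /equivalence_relP[_ e2_trans] aS cover.
have [all_e1 | /forall_inPn[x xS not_e1ax]] := boolP [forall x in S, e1 a x].
  by left; apply/forall_inP.
have e2ax : e2 a x by have := cover a x aS xS; rewrite (negbTE not_e1ax).
right => y yS; apply/negPn/negP => not_e2ay.
have e1ay : e1 a y by have := cover a y aS yS; rewrite (negbTE not_e2ay) orbF.
case/orP: (cover x y xS yS) => [e1xy | e2xy].
  by case/negP: not_e1ax; rewrite (e1_trans _ _ e1ay) -(e1_trans _ _ e1xy) e1_refl.
by case/negP: not_e2ay; rewrite (e2_trans _ _ e2ax).
Qed.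

Lemma Sigma_subset_Pi (M d q : nat) (A B : {set 'Z_M}) (z a b : 'Z_M) :
    (1 < M)%N -> (d %| M)%N -> (q %| d)%N -> a + b \in Lam M d z ->
    {in SigmaA A B (Lam M d z), forall a', a' \in Pi M q a} ->
  SigmaA A B (Lam M d z) \subset A :&: Pi M q a /\
  SigmaB A B (Lam M d z) \subset B :&: Pi M q b.
Proof.
move=> M_gt1 d_M q_d ab_Lam SA_Pi; have q_M := dvdn_trans q_d d_M.
have /equivalence_relP[_ Lam_trans] := Lam_equiv M_gt1 d_M.
split; apply/subsetP => x.
  by move=> xSA; rewrite inE SA_Pi // andbT; move: xSA; rewrite inE => /andP[].
rewrite inE => /andP[xB /exists_inP[a' a'A a'x_Lam]]; rewrite in_setI xB andTb inE.
have a'SA : a' \in SigmaA A B (Lam M d z) by rewrite inE a'A; apply/exists_inP; exists x.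
have q_aa' : (q %| (a - a')%R)%N by have := SA_Pi _ a'SA; rewrite inE.
have d_sums : (d %| ((a + b) - (a' + x))%R)%N.
  by move: a'x_Lam; rewrite (Lam_trans _ _ ab_Lam) inE.
have -> : b - x = ((a + b) - (a' + x)) - (a - a') by ring.
exact (dvdn_valB M_gt1 q_M (dvdn_trans q_d d_sums) q_aa').
Qed.

Section TwoPrimes.

Variables (p1 p2 k1 k2 R M : nat).
Hypotheses (p1_prime : prime p1) (p2_prime : prime p2) (p1_neq_p2 : p1 != p2).
Hypotheses (R_p1 : coprime R p1) (R_p2 : coprime R p2).
Hypothesis defM : M = (p1 ^ k1.+1 * p2 ^ k2.+1 * R)%N.
Variables (A B : {set 'Z_M}).
Hypothesis tAB : tiling A B.

Let m := (p1 ^ k1 * p2 ^ k2 * R)%N.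

Let M_eq : M = (m * (p1 * p2))%N.
Proof. by rewrite defM /m !expnSr; ring. Qed.

Let M_divE : (M %/ (p1 * p2))%N = m.
Proof. by rewrite M_eq mulnK // muln_gt0 !prime_gt0. Qed.

Let m_dvd_M : (m %| M)%N.
Proof. by rewrite M_eq dvdn_mulr. Qed.

Let M_gt1 : (1 < M)%N.
Proof.
have M_gt0 : (0 < M)%N.
  rewrite defM !muln_gt0 !expn_gt0 (prime_gt0 p1_prime) (prime_gt0 p2_prime).
  exact: coprime_prime_gt0 p1_prime R_p1.
apply: leq_trans (prime_gt1 p1_prime) (dvdn_leq M_gt0 _).
by rewrite defM expnS -!mulnA dvdn_mulr.
Qed.

Let rad_M p : prime p -> (p %| M)%N -> (p %| p1 * p2 * R)%N.
Proof. by move=> p_prime; rewrite defM !Euclid_dvdM // !Euclid_dvdX //= !andbT. Qed.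

Lemma tiling_Lam_Pi (a1 a2 b1 b2 : 'Z_M) :
    a1 \in A -> a2 \in A -> b1 \in B -> b2 \in B -> a1 + b1 \in Lam M m (a2 + b2) ->
  (a2 \in Pi M (p1 ^ k1) a1) || (a2 \in Pi M (p2 ^ k2) a1).
Proof.
move=> a1A a2A b1B b2B sums_Lam; rewrite !inE; apply/negPn/negP.
rewrite negb_or => /andP[not_p1 not_p2].
have := gcdn_mul_rad_dvd p1_prime p2_prime p1_neq_p2 R_p1 R_p2 not_p1 not_p2.
rewrite inE in sums_Lam; rewrite -defM => /dvdn_trans/(_ sums_Lam) gcd_dvd.
have a1_eq := tiling_eq_of_gcdn_dvd M_gt1 tAB a1A a2A b1B b2B rad_M gcd_dvd.
by move: not_p1; rewrite a1_eq subrr dvdn0.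
Qed.

Lemma SigmaA_Pi_cover (z : 'Z_M) :
  {in SigmaA A B (Lam M m z) &, forall a1 a2,
    (a2 \in Pi M (p1 ^ k1) a1) || (a2 \in Pi M (p2 ^ k2) a1)}.
Proof.
move=> a1 a2 /setIdP[a1A /exists_inP[b1 b1B s1_Lam]].
move=> /setIdP[a2A /exists_inP[b2 b2B s2_Lam]].
have /equivalence_relP[_ Lam_trans] := Lam_equiv M_gt1 m_dvd_M.
by apply: tiling_Lam_Pi a1A a2A b1B b2B _; rewrite -(Lam_trans _ _ s2_Lam).
Qed.

Lemma Sigma_subset_Pi_two_primes (z a b : 'Z_M) : a \in A -> b \in B -> a + b = z ->
  let Lambda := Lam M (M %/ (p1 * p2)) z in
  SigmaA A B Lambda \subset A :&: Pi M (p1 ^ k1) a /\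
    SigmaB A B Lambda \subset B :&: Pi M (p1 ^ k1) b \/
  SigmaA A B Lambda \subset A :&: Pi M (p2 ^ k2) a /\
    SigmaB A B Lambda \subset B :&: Pi M (p2 ^ k2) b.
Proof.
move=> aA bB ab_z; rewrite /= M_divE.
have ab_Lam : a + b \in Lam M m z by rewrite ab_z inE subrr dvdn0.
have aSA : a \in SigmaA A B (Lam M m z).
  by apply/setIdP; split=> //; apply/exists_inP; exists b.
have q1_m : (p1 ^ k1 %| m)%N by rewrite /m -mulnA dvdn_mulr.
have q2_m : (p2 ^ k2 %| m)%N by rewrite /m mulnAC dvdn_mull ?dvdn_mulr.
have Lam_equiv_q q := Lam_equiv M_gt1 (dvdn_trans q m_dvd_M).
have [SA_Pi | SA_Pi] := equiv_cover_class (Lam_equiv_q _ q1_m) (Lam_equiv_q _ q2_m) aSA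
  (@SigmaA_Pi_cover z).
  by left; exact: Sigma_subset_Pi M_gt1 m_dvd_M q1_m ab_Lam SA_Pi.
by right; exact: Sigma_subset_Pi M_gt1 m_dvd_M q2_m ab_Lam SA_Pi.
Qed.

End TwoPrimes.

Theorem lemma7p1 (K : nat) (p n : 'I_K -> nat) (M : nat)
    (hp : forall nu, prime (p nu)) (hpinj : injective p)
    (hn : forall nu, (0 < n nu)%N)
    (hM : M = (\prod_(nu < K) p nu ^ n nu)%N)
    (A B : {set 'Z_M}) (hAB : tiling A B)
    (i j : 'I_K) (hij : i != j) (z : 'Z_M) (a b : 'Z_M)
    (ha : a \in A) (hb : b \in B) (hz : a + b = z) :
  let Lambda := Lam M (M %/ (p i * p j))%N z in
  exists nu : 'I_K, (nu = i \/ nu = j) /\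
    SigmaA A B Lambda \subset A :&: Pi M (p nu ^ (n nu).-1)%N a /\
    SigmaB A B Lambda \subset B :&: Pi M (p nu ^ (n nu).-1)%N b.
Proof.
set R := (\prod_(k | (k != i) && (k != j)) p k ^ n k)%N.
have R_pi : coprime R (p i) by apply: coprime_prod_pfactor; rewrite ?eqxx.
have R_pj : coprime R (p j) by apply: coprime_prod_pfactor; rewrite ?eqxx ?andbF.
have defM : M = (p i ^ (n i).-1.+1 * p j ^ (n j).-1.+1 * R)%N.
  by rewrite !prednK // hM (bigD1 i) // (bigD1 j) 1?eq_sym //= mulnA.
have p_neq : p i != p j by apply: contra hij => /eqP/hpinj->.
have [[SA SB] | [SA SB]] := Sigma_subset_Pi_two_primes (hp i) (hp j) p_neq
  R_pi R_pj defM hAB ha hb hz.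
  by exists i; split; [left | split].
by exists j; split; [right | split].
Qed.
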